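(* Let $\Sigma$ be a nominal $\mathrm{Perm}$-set and $O$ a nominal $\mathrm{Sb}$-set, and let $S(X)=UO\times(\Sigma\mathbin{-\!\!*}X)$ and $B(X)=O\times(F\Sigma\Rightarrow_{\mathrm{Sb}}X)$. Suppose $((F\Sigma)^*\Rightarrow_{\mathrm{Sb}}O,\zeta)$ is a final $B$-coalgebra. Then $\big(U((F\Sigma)^*\Rightarrow_{\mathrm{Sb}}O),\ \lambda^{-1}\circ U(\zeta)\big)$ is a final $S$-coalgebra; in particular its carrier is the set $(F\Sigma)^*\Rightarrow_{\mathrm{Sb}}O$.
   Context: Atoms $\mathbb{A}$ (countably infinite); $\mathrm{Sb}$ = monoid of functions $\mathbb{A}\to\mathbb{A}$ that are the identity outside a finite set; $\mathrm{Perm}$ its bijections. Nominal $M$-sets ($M\in\{\mathrm{Sb},\mathrm{Perm}\}$): $M$-sets whose elements $x$ have finite supports $C$ ($m_1|_C=m_2|_C\Rightarrow m_1x=m_2x$); $\mathrm{supp}(x)$ is the least. $U$ restricts $\mathrm{Sb}$-actions to $\mathrm{Perm}$. $F(X)=(\mathrm{Sb}\times X)/{\sim}$, $\sim$ least equivalence with $(m,gx)\sim(mg,x)$ ($g\in\mathrm{Perm}$) and $(m,x)\sim(m',x)$ if $m|_C=m'|_C$ for a support $C$ of $x$; action $n[m,x]=[nm,x]$; $F\dashv U$ with counit $\epsilon[m,y]=m y$. $x\perp y$: disjoint supports; $A\otimes B=\{(a,b)\mid a\perp b\}$. $A\mathbin{-\!\!*}X$: nominal $\mathrm{Perm}$-set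 of partial functions $f\colon A\rightharpoonup X$, finitely supported for $(g f)(a)=g f(g^{-1}a)$, defined exactly on $\{a\mid f\perp a\}$, with $\mathrm{supp}(f)=\bigcup_{a\in\mathrm{dom}f}\mathrm{supp}(f(a))\setminus\mathrm{supp}(a)$; evaluation $\mathrm{ev}(f,a)=f(a)$. $A\Rightarrow_{\mathrm{Sb}}X$: the exponential in nominal $\mathrm{Sb}$-sets, i.e. finitely supported $\mathrm{Sb}$-equivariant $f\colon\mathrm{Sb}\times A\to X$ with $(m f)(n,a)=f(nm,a)$. $(F\Sigma)^*$: words over $F\Sigma$ with pointwise action. The isomorphism $p\colon F(A\otimes B)\to F(A)\times F(B)$, $p[m,(a,b)]=([m,a],[m,b])$. For a nominal $\mathrm{Sb}$-set $Z$, $\phi\colon(\Sigma\mathbin{-\!\!*}UZ)\to U(F\Sigma\Rightarrow_{\mathrm{Sb}}Z)$ is the isomorphism $\phi(\psi)(s,\xi)=\epsilon(F(\mathrm{ev})(p^{-1}([s,\psi],\xi)))$, and $\lambda_Z\colon UO\times(\Sigma\mathbin{-\!\!*}UZ)\to U(O\times(F\Sigma\Rightarrow_{\mathrm{Sb}}Z))$ is $\lambda_Z(o,\psi)=(o,\phi(\psi))$. An $H$-coalgebra is a pair $(X,\gamma\colon X\to HX)$; final means terminal in the category of $H$-coalgebras. *)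

From Stdlib Require Import List ClassicalEpsilon FunctionalExtensionality ProofIrrelevance.
Import ListNotations.


Definition atom := nat.

Record Sb := mkSb {
  sbf :> atom -> atom;
  sb_fin : exists l : list atom, forall a, ~ In a l -> sbf a = a }.

Lemma sb_id_fin : exists l : list atom, forall a : atom, ~ In a l -> a = a.
Proof. exists nil; auto. Qed.
Definition sb_id : Sb := mkSb (fun a => a) sb_id_fin.

Lemma sb_comp_fin (m n : Sb) :
  exists l : list atom, forall a, ~ In a l -> m (n a) = a.
Proof.
  destruct (sb_fin m) as [lm Hm]; destruct (sb_fin n) as [ln Hn].
  exists (lm ++ ln); intros a Ha.
  rewrite Hn; [rewrite Hm|]; auto; intro; apply Ha; apply in_or_app; auto.
Qed.
Definition sb_comp (m n : Sb) : Sb := mkSb (fun a => m (n a)) (sb_comp_fin m n).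

Record Perm := mkPerm {
  pfun :> Sb;
  pinv : Sb;
  pinvK : forall a, pinv (pfun a) = a;
  pfunK : forall a, pfun (pinv a) = a }.

Definition perm_id : Perm :=
  mkPerm sb_id sb_id (fun a => eq_refl) (fun a => eq_refl).

Lemma perm_comp_K (g h : Perm) a : sb_comp (pinv h) (pinv g) (sb_comp g h a) = a.
Proof. simpl. rewrite pinvK, pinvK. reflexivity. Qed.
Lemma perm_comp_KV (g h : Perm) a : sb_comp g h (sb_comp (pinv h) (pinv g) a) = a.
Proof. simpl. rewrite pfunK, pfunK. reflexivity. Qed.
Definition perm_comp (g h : Perm) : Perm :=
  mkPerm (sb_comp g h) (sb_comp (pinv h) (pinv g)) (perm_comp_K g h) (perm_comp_KV g h).

Definition perm_inv (g : Perm) : Perm := mkPerm (pinv g) (pfun g) (pfunK g) (pinvK g).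

Definition agree (f g : atom -> atom) (C : list atom) : Prop :=
  forall a, In a C -> f a = g a.

Definition supportsS {X : Type} (act : Sb -> X -> X) (C : list atom) (x : X) : Prop :=
  forall m1 m2 : Sb, agree m1 m2 C -> act m1 x = act m2 x.
Definition supportsP {X : Type} (act : Perm -> X -> X) (C : list atom) (x : X) : Prop :=
  forall g1 g2 : Perm, agree g1 g2 C -> act g1 x = act g2 x.

(* the least support (w.r.t. the Perm-action), as the intersection of all
   finite supports *)
Definition suppP {X : Type} (act : Perm -> X -> X) (x : X) (a : atom) : Prop :=
  forall C, supportsP act C x -> In a C.

Definition disjP {X Y : Type} (actX : Perm -> X -> X) (actY : Perm -> Y -> Y)
  (x : X) (y : Y) : Prop :=
  forall a, suppP actX x a -> suppP actY y a -> False.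

Definition nominalS {X : Type} (act : Sb -> X -> X) : Prop :=
  (forall x, act sb_id x = x) /\
  (forall m n x, act (sb_comp m n) x = act m (act n x)) /\
  (forall x, exists C, supportsS act C x).
Definition nominalP {X : Type} (act : Perm -> X -> X) : Prop :=
  (forall x, act perm_id x = x) /\
  (forall g h x, act (perm_comp g h) x = act g (act h x)) /\
  (forall x, exists C, supportsP act C x).

Record NomSb := { sCar :> Type; sAct : Sb -> sCar -> sCar; sNom : nominalS sAct }.
Record NomPerm := { pCar :> Type; pAct : Perm -> pCar -> pCar; pNom : nominalP pAct }.

Definition Uact {X : Type} (act : Sb -> X -> X) : Perm -> X -> X :=
  fun g x => act (pfun g) x.

Definition sepact {A X : Type} (actA : Perm -> A -> A) (actX : Perm -> X -> X)
  (g : Perm) (f : A -> option X) : A -> option X :=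
  fun a => option_map (actX g) (f (actA (perm_inv g) a)).

Definition SepFun (A X : Type) (actA : Perm -> A -> A) (actX : Perm -> X -> X) :=
  { f : A -> option X |
      (exists C, supportsP (sepact actA actX) C f) /\
      (forall a, f a <> None <-> disjP (sepact actA actX) actA f a) }.

Inductive Frel {A : Type} (actA : Perm -> A -> A) : Sb * A -> Sb * A -> Prop :=
  | Frel_perm (m : Sb) (g : Perm) (x : A) :
      Frel actA (m, actA g x) (sb_comp m g, x)
  | Frel_supp (m m' : Sb) (x : A) (C : list atom) :
      supportsP actA C x -> agree m m' C -> Frel actA (m, x) (m', x)
  | Frel_refl p : Frel actA p p
  | Frel_sym p q : Frel actA p q -> Frel actA q p
  | Frel_trans p q r : Frel actA p q -> Frel actA q r -> Frel actA p r.

(* F(A) = (Sb x A)/~ , as the type of equivalence classes *)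
Definition FT (A : Type) (actA : Perm -> A -> A) : Type :=
  { P : Sb * A -> Prop | exists p, P = Frel actA p }.

Definition Fclass {A : Type} (actA : Perm -> A -> A) (p : Sb * A) : FT A actA :=
  exist _ (Frel actA p) (ex_intro _ p eq_refl).

Definition Frep {A : Type} {actA : Perm -> A -> A} (xi : FT A actA) : Sb * A :=
  proj1_sig (constructive_indefinite_description _ (proj2_sig xi)).

Definition Fact {A : Type} (actA : Perm -> A -> A) (n : Sb) (xi : FT A actA) : FT A actA :=
  Fclass actA (sb_comp n (fst (Frep xi)), snd (Frep xi)).

Definition wact {X : Type} (act : Sb -> X -> X) (n : Sb) (w : list X) : list X :=
  map (act n) w.

Definition expact {A X : Type} (m : Sb) (f : Sb -> A -> X) : Sb -> A -> X :=
  fun n a => f (sb_comp n m) a.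

Definition Exp (A X : Type) (actA : Sb -> A -> A) (actX : Sb -> X -> X) :=
  { f : Sb -> A -> X |
      (forall k n a, f (sb_comp k n) (actA k a) = actX k (f n a)) /\
      (exists C, supportsS expact C f) }.

Section Coalg.
Variables (Sig : NomPerm) (O : NomSb).

Definition FSig := FT (pCar Sig) (pAct Sig).
Definition FSigAct : Sb -> FSig -> FSig := Fact (pAct Sig).

Definition Bobj {Z : Type} (actZ : Sb -> Z -> Z) : Type :=
  sCar O * Exp FSig Z FSigAct actZ.

Definition B_equiv {Z : Type} {actZ : Sb -> Z -> Z} (zeta : Z -> Bobj actZ) : Prop :=
  forall m z, fst (zeta (actZ m z)) = sAct O m (fst (zeta z)) /\
              proj1_sig (snd (zeta (actZ m z))) = expact m (proj1_sig (snd (zeta z))).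

Definition B_hom {Y : NomSb} (delta : sCar Y -> Bobj (sAct Y))
  {Z : Type} {actZ : Sb -> Z -> Z} (zeta : Z -> Bobj actZ) (h : sCar Y -> Z) : Prop :=
  (forall m y, h (sAct Y m y) = actZ m (h y)) /\
  (forall y, fst (zeta (h y)) = fst (delta y) /\
     forall n xi, proj1_sig (snd (zeta (h y))) n xi = h (proj1_sig (snd (delta y)) n xi)).

Definition final_B {Z : Type} {actZ : Sb -> Z -> Z} (zeta : Z -> Bobj actZ) : Prop :=
  nominalS actZ /\ B_equiv zeta /\
  forall (Y : NomSb) (delta : sCar Y -> Bobj (sAct Y)), B_equiv delta ->
    exists h : sCar Y -> Z, B_hom delta zeta h /\
      forall h' : sCar Y -> Z, B_hom delta zeta h' -> forall y, h' y = h y.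

Definition Sobj {X : Type} (actX : Perm -> X -> X) : Type :=
  sCar O * SepFun (pCar Sig) X (pAct Sig) actX.

Definition S_equiv {X : Type} {actX : Perm -> X -> X} (gam : X -> Sobj actX) : Prop :=
  forall g x, fst (gam (actX g x)) = Uact (sAct O) g (fst (gam x)) /\
    proj1_sig (snd (gam (actX g x))) = sepact (pAct Sig) actX g (proj1_sig (snd (gam x))).

(* h is an S-coalgebra morphism: h equivariant and gam o h = S(h) o delta,
   where S(h)(o, psi) = (o, S(h) psi) and S(h) psi is the (unique) element of
   Sigma -* X extending the partial function h o psi *)
Definition S_hom {Y : NomPerm} (delta : pCar Y -> Sobj (pAct Y))
  {X : Type} {actX : Perm -> X -> X} (gam : X -> Sobj actX) (h : pCar Y -> X) : Prop :=
  (forall g y, h (pAct Y g y) = actX g (h y)) /\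
  (forall y, fst (gam (h y)) = fst (delta y) /\
     forall a x, proj1_sig (snd (delta y)) a = Some x ->
                 proj1_sig (snd (gam (h y))) a = Some (h x)).

Definition final_S {X : Type} {actX : Perm -> X -> X} (gam : X -> Sobj actX) : Prop :=
  nominalP actX /\ S_equiv gam /\
  forall (Y : NomPerm) (delta : pCar Y -> Sobj (pAct Y)), S_equiv delta ->
    exists h : pCar Y -> X, S_hom delta gam h /\
      forall h' : pCar Y -> X, S_hom delta gam h' -> forall y, h' y = h y.

(* phi(psi)(s, xi) = z  iff  z = eps(F(ev)(p^{-1}([s,psi], xi))), i.e. there are
   m', psi' in Sigma -* UZ and a' in Sigma with psi' # a' (equivalently
   psi' a' defined), [m',psi'] = [s,psi] in F(Sigma -* UZ), [m',a'] = xi in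
   F Sigma, and z = m' . psi'(a'). *)
Definition phi_rel {Z : Type} {actZ : Sb -> Z -> Z}
  (psi : SepFun (pCar Sig) Z (pAct Sig) (Uact actZ)) (s : Sb) (xi : FSig) (z : Z) : Prop :=
  exists (m' : Sb) (psi' : SepFun (pCar Sig) Z (pAct Sig) (Uact actZ)) (a' : pCar Sig) (x : Z),
    proj1_sig psi' a' = Some x /\
    Frel (sepact (pAct Sig) (Uact actZ)) (m', proj1_sig psi') (s, proj1_sig psi) /\
    Fclass (pAct Sig) (m', a') = xi /\
    z = actZ m' x.

End Coalg.

Definition Carrier (Sig : NomPerm) (O : NomSb) : Type :=
  Exp (list (FSig Sig)) (sCar O) (wact (FSigAct Sig)) (sAct O).
Lemma sb_eq (m n : Sb) : (forall a, m a = n a) -> m = n.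
Proof.
  destruct m as [f Hf], n as [g Hg]; simpl; intro H.
  assert (f = g) by (apply functional_extensionality; exact H).
  subst g. f_equal. apply proof_irrelevance.
Qed.
Lemma sb_comp_assoc (k n m : Sb) : sb_comp (sb_comp k n) m = sb_comp k (sb_comp n m).
Proof. apply sb_eq; reflexivity. Qed.

Definition CarrierAct (Sig : NomPerm) (O : NomSb) (m : Sb) (e : Carrier Sig O)
  : Carrier Sig O.
Proof.
  refine (exist _ (expact m (proj1_sig e)) _).
  destruct (proj2_sig e) as [Heq [C HC]]; split.
  - intros k n a. unfold expact. rewrite sb_comp_assoc. apply Heq.
  - exists (map m C). intros m1 m2 Hag. unfold expact.
    apply functional_extensionality; intro n.
    apply functional_extensionality; intro a.
    rewrite !sb_comp_assoc.
    assert (E : expact (sb_comp m1 m) (proj1_sig e) = expact (sb_comp m2 m) (proj1_sig e)).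
    { apply HC. intros c Hc. simpl. apply Hag. apply in_map; exact Hc. }
    exact (f_equal (fun f => f n a) E).
Defined.

(* The final S-coalgebra is transported along the adjunction F -| U.  The
   isomorphism phi : Sigma -* UZ ~ U(F Sigma =>_Sb Z) is made concrete: its inverse
   sends f to the partial map a |-> f(id, [id, a]), defined on the a fresh for f, and
   f is recovered from these values because every class in F Sigma has a
   representative [m', a'] with a' fresh for f and m' agreeing with any prescribed
   substitution on supp f.  An S-coalgebra delta on Y induces a B-coalgebra on F Y,
   [m, y] |-> m . (o_y, phi(eta o psi_y)); S-morphisms Y -> U Z correspond to
   B-morphisms F Y -> Z by restriction to [id, y] and extension along F, so the
   universal property of zeta transfers to lambda^-1 o U zeta.  Well-definedness on
   classes rests on two facts about nominal sets: least supports exist, and a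
   Perm-support of an element of a nominal Sb-set is also an Sb-support. *)

From Stdlib Require Import List Arith Lia ClassicalEpsilon FunctionalExtensionality
  ProofIrrelevance Classical PropExtensionality.
Import ListNotations.

Definition transp (x y a : atom) : atom :=
  if a =? x then y else if a =? y then x else a.

Lemma transp_l x y : transp x y x = y.
Proof. unfold transp. now rewrite Nat.eqb_refl. Qed.

Lemma transp_other x y a : a <> x -> a <> y -> transp x y a = a.
Proof.
  intros Hx Hy. unfold transp.
  now rewrite (proj2 (Nat.eqb_neq a x) Hx), (proj2 (Nat.eqb_neq a y) Hy).
Qed.

Lemma transp_invol x y a : transp x y (transp x y a) = a.
Proof.
  destruct (Nat.eq_dec a x) as [->|Hx]; [|destruct (Nat.eq_dec a y) as [->|Hy]].
  - rewrite transp_l. destruct (Nat.eq_dec y x) as [->|Hyx]; [apply transp_l|].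
    unfold transp. now rewrite (proj2 (Nat.eqb_neq y x) Hyx), Nat.eqb_refl.
  - unfold transp at 2. rewrite (proj2 (Nat.eqb_neq y x) Hx), Nat.eqb_refl. apply transp_l.
  - now rewrite !(transp_other x y a).
Qed.

Fixpoint swaps (ps : list (atom * atom)) (a : atom) : atom :=
  match ps with
  | [] => a
  | (x, y) :: ps' => transp x y (swaps ps' a)
  end.

Fixpoint swapped_atoms (ps : list (atom * atom)) : list atom :=
  match ps with
  | [] => []
  | (x, y) :: ps' => x :: y :: swapped_atoms ps'
  end.

Lemma swaps_app ps1 ps2 a : swaps (ps1 ++ ps2) a = swaps ps1 (swaps ps2 a).
Proof. induction ps1 as [|[x y] ps IH]; simpl; congruence. Qed.

Lemma swaps_revK ps a : swaps (rev ps) (swaps ps a) = a.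
Proof.
  induction ps as [|[x y] ps IH]; [reflexivity|].
  simpl. now rewrite swaps_app; simpl; rewrite transp_invol.
Qed.

Lemma swaps_Krev ps a : swaps ps (swaps (rev ps) a) = a.
Proof. rewrite <- (rev_involutive ps) at 1. apply swaps_revK. Qed.

Lemma swaps_out ps a : ~ In a (swapped_atoms ps) -> swaps ps a = a.
Proof.
  induction ps as [|[x y] ps IH]; simpl; [auto|].
  intro H. rewrite IH by tauto. apply transp_other; intros ->; tauto.
Qed.

Definition swaps_perm (ps : list (atom * atom)) : Perm :=
  mkPerm (mkSb (swaps ps) (ex_intro _ _ (swaps_out ps)))
         (mkSb (swaps (rev ps)) (ex_intro _ _ (swaps_out (rev ps))))
         (swaps_revK ps) (swaps_Krev ps).

Definition inj_on (D : list atom) (f : atom -> atom) : Prop :=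
  forall a b, In a D -> In b D -> f a = f b -> a = b.

Lemma in_swapped_atoms_map (D : list atom) (u v : atom -> atom) a :
  In a (swapped_atoms (map (fun d => (u d, v d)) D)) ->
  exists d, In d D /\ (a = u d \/ a = v d).
Proof.
  induction D as [|d D IH]; simpl; [tauto|].
  intros [H|[H|H]]; eauto. destruct (IH H) as [d' [? ?]]; eauto.
Qed.

Lemma swaps_map (D : list atom) (u v : atom -> atom) :
  NoDup D -> inj_on D u -> inj_on D v -> (forall a b, In a D -> In b D -> u a <> v b) ->
  forall d, In d D -> swaps (map (fun d => (u d, v d)) D) (u d) = v d.
Proof.
  induction D as [|d0 D IH]; [contradiction|].
  intros ND Hu Hv Huv d Hd. inversion ND as [|? ? Hd0 ND']; subst. simpl.
  destruct Hd as [<-|Hd].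
  - rewrite swaps_out; [apply transp_l|].
    intro Hin. destruct (in_swapped_atoms_map _ _ _ _ Hin) as [d' [Hd' [E|E]]].
    + apply Hd0. replace d0 with d'; [exact Hd'|]. symmetry. apply Hu; simpl; auto.
    + apply (Huv d0 d'); simpl; auto.
  - rewrite IH; auto.
    + apply transp_other.
      * intro E. apply (Huv d0 d); simpl; auto.
      * intro E. apply Hd0. replace d0 with d; [exact Hd|]. apply Hv; simpl; auto.
    + intros a b Ha Hb. apply Hu; simpl; auto.
    + intros a b Ha Hb. apply Hv; simpl; auto.
    + intros a b Ha Hb. apply Huv; simpl; auto.
Qed.

Definition above (l : list atom) : atom := S (list_max l).

Lemma above_gt l a : In a l -> a < above l.
Proof.
  intro H. unfold above. enough (a <= list_max l) by lia.
  revert a H. apply Forall_forall, list_max_le. reflexivity.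
Qed.

(* First move D to the fresh block D + M, then from there onto f D. *)
Lemma perm_extending (D : list atom) (f : atom -> atom) :
  inj_on D f -> exists p : Perm, forall d, In d D -> p d = f d.
Proof.
  intro Hf.
  set (D' := nodup Nat.eq_dec D).
  set (M := above (D ++ map f D)).
  assert (HD : forall d, In d D' <-> In d D) by (intro; apply nodup_In).
  assert (HM : forall d, In d D -> d < M /\ f d < M).
  { intros d Hd. split; apply above_gt; apply in_or_app; [left|right; apply in_map]; exact Hd. }
  exists (perm_comp (swaps_perm (map (fun d => (d + M, f d)) D'))
                    (swaps_perm (map (fun d => (d, d + M)) D'))).
  assert (Shift : forall d, In d D' -> swaps (map (fun d => (d, d + M)) D') d = d + M).
  { apply (swaps_map D' (fun d => d) (fun d => d + M)); try apply NoDup_nodup;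
      intros a b Ha Hb; try lia.
    apply HD, HM in Ha. lia. }
  assert (Land : forall d, In d D' -> swaps (map (fun d => (d + M, f d)) D') (d + M) = f d).
  { apply (swaps_map D' (fun d => d + M) f); try apply NoDup_nodup;
      intros a b Ha Hb; try lia.
    - apply HD in Ha, Hb. apply Hf; assumption.
    - apply HD, HM in Hb. lia. }
  intros d Hd. apply HD in Hd. simpl. now rewrite Shift, Land.
Qed.

Definition inb (c : atom) (l : list atom) : bool :=
  if in_dec Nat.eq_dec c l then true else false.

Lemma inbP c l : reflect (In c l) (inb c l).
Proof. unfold inb. destruct (in_dec Nat.eq_dec c l); constructor; assumption. Qed.

Lemma perm_patch (D : list atom) (P : atom -> bool) (g : Perm) (M : atom) :
  (forall d, In d D -> g d < M) ->
  exists p : Perm, forall d, In d D -> p d = if P d then g d else d + M.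
Proof.
  intro HM. apply perm_extending. intros a b Ha Hb.
  pose proof (HM a Ha). pose proof (HM b Hb).
  destruct (P a), (P b); intro E; try lia.
  rewrite <- (pinvK g a), <- (pinvK g b). now f_equal.
Qed.

Definition perm_action {X : Type} (act : Perm -> X -> X) : Prop :=
  (forall x, act perm_id x = x) /\
  (forall g h x, act (perm_comp g h) x = act g (act h x)) /\
  (forall (g1 g2 : Perm) x, (forall a, g1 a = g2 a) -> act g1 x = act g2 x).

Lemma nominalP_perm_action {X : Type} (act : Perm -> X -> X) :
  nominalP act -> perm_action act.
Proof.
  intros [Hid [Hcomp Hsupp]]. split; [exact Hid|split; [exact Hcomp|]].
  intros g1 g2 x E. destruct (Hsupp x) as [C HC]. apply HC. intros a _. apply E.
Qed.

Lemma supportsP_Uact {X : Type} (act : Sb -> X -> X) C x :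
  supportsS act C x -> supportsP (Uact act) C x.
Proof. intros H g1 g2 Hag. apply H, Hag. Qed.

Section PermAction.
Context {X : Type} {act : Perm -> X -> X} (Hact : perm_action act).

Lemma act_invK g x : act (perm_inv g) (act g x) = x.
Proof.
  destruct Hact as [Hid [Hcomp Hext]].
  rewrite <- Hcomp. transitivity (act perm_id x); [|apply Hid].
  apply Hext. intro a. apply pinvK.
Qed.

Lemma act_Kinv g x : act g (act (perm_inv g) x) = x.
Proof.
  destruct Hact as [Hid [Hcomp Hext]].
  rewrite <- Hcomp. transitivity (act perm_id x); [|apply Hid].
  apply Hext. intro a. apply pfunK.
Qed.

Lemma supportsP_act C x (g : Perm) :
  supportsP act C x -> supportsP act (map g C) (act g x).
Proof.
  destruct Hact as [_ [Hcomp _]]. intros HC h1 h2 Hag.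
  rewrite <- !Hcomp. apply HC. intros a Ha. apply Hag, in_map, Ha.
Qed.

Lemma suppP_act g x c : suppP act (act g x) c <-> suppP act x (pinv g c).
Proof.
  split.
  - intros H C HC. apply (supportsP_act _ _ g), H, in_map_iff in HC as [d [<- Hd]].
    now rewrite pinvK.
  - intros H C HC. apply (supportsP_act _ _ (perm_inv g)) in HC.
    rewrite act_invK in HC. apply H, in_map_iff in HC as [d [E Hd]].
    replace c with d; [exact Hd|]. rewrite <- (pfunK g d), <- (pfunK g c). now f_equal.
Qed.

(* Pass from g1 to g2 through permutations u, w, v that send atoms outside C1 (resp.
   C1 and C2, C2) to a fresh block, so that each step only changes atoms outside one
   of the two supports. *)
Lemma supportsP_inter C1 C2 x :
  supportsP act C1 x -> supportsP act C2 x ->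
  supportsP act (filter (fun c => inb c C2) C1) x.
Proof.
  intros S1 S2 g1 g2 Hag.
  set (D := C1 ++ C2).
  set (M := above (map g1 D ++ map g2 D)).
  assert (HD1 : forall c, In c C1 -> In c D) by (intros; apply in_or_app; auto).
  assert (HD2 : forall c, In c C2 -> In c D) by (intros; apply in_or_app; auto).
  assert (HM1 : forall c, In c D -> g1 c < M)
    by (intros; apply above_gt, in_or_app; left; apply in_map; auto).
  assert (HM2 : forall c, In c D -> g2 c < M)
    by (intros; apply above_gt, in_or_app; right; apply in_map; auto).
  destruct (perm_patch D (fun c => inb c C1) g1 M HM1) as [u Hu].
  destruct (perm_patch D (fun c => andb (inb c C1) (inb c C2)) g1 M HM1) as [w Hw].
  destruct (perm_patch D (fun c => inb c C2) g2 M HM2) as [v Hv].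
  transitivity (act u x).
  { apply S1. intros c Hc. rewrite Hu by auto. now destruct (inbP c C1). }
  transitivity (act w x).
  { apply S2. intros c Hc. rewrite Hu, Hw by auto.
    destruct (inbP c C1), (inbP c C2); easy. }
  transitivity (act v x).
  { apply S1. intros c Hc. rewrite Hv, Hw by auto.
    destruct (inbP c C1), (inbP c C2); try easy.
    apply Hag, filter_In. split; [assumption|]. now destruct (inbP c C2). }
  symmetry. apply S2. intros c Hc. rewrite Hv by auto. now destruct (inbP c C2).
Qed.

Lemma supportsP_avoid C x c :
  supportsP act C x -> ~ suppP act x c ->
  exists C', supportsP act C' x /\ incl C' C /\ ~ In c C'.
Proof.
  intros HC Hc. apply not_all_ex_not in Hc as [Cc HCc].
  apply imply_to_and in HCc as [HCc Hnc].
  exists (filter (fun d => inb d Cc) C). split; [|split].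
  - now apply supportsP_inter.
  - intros d Hd. now apply filter_In in Hd.
  - intro Hin. apply filter_In in Hin as [_ Hin]. now destruct (inbP c Cc).
Qed.

Lemma supportsP_within_supp (l : list atom) : forall C x,
  supportsP act C x -> (forall c, In c C -> suppP act x c \/ In c l) ->
  exists L, supportsP act L x /\ forall c, In c L -> suppP act x c.
Proof.
  induction l as [|k l IH]; intros C x HC Hl.
  - exists C. split; [exact HC|]. intros c Hc. now destruct (Hl c Hc).
  - destruct (classic (suppP act x k)) as [Hk|Hk].
    + apply (IH C); [exact HC|]. intros c Hc.
      destruct (Hl c Hc) as [H|[<-|H]]; auto.
    + destruct (supportsP_avoid C x k HC Hk) as [C' [HC' [Hincl Hnk]]].
      apply (IH C'); [exact HC'|]. intros c Hc.
      destruct (Hl c (Hincl c Hc)) as [H|[<-|H]]; tauto.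
Qed.

Lemma least_supportP x :
  (exists C, supportsP act C x) ->
  exists L, supportsP act L x /\ forall c, In c L <-> suppP act x c.
Proof.
  intros [C HC]. destruct (supportsP_within_supp C C x HC) as [L [HL Hsupp]].
  { intros c Hc. now right. }
  exists L. split; [exact HL|]. intro c. split; [apply Hsupp|]. intro H. now apply H.
Qed.

End PermAction.

(* Move the atoms of C' outside C to fresh atoms, beyond the moved atoms of m1 and m2. *)
Lemma supportsS_of_supportsP {X : Type} (act : Sb -> X -> X) :
  (forall x, act sb_id x = x) -> (forall m n x, act (sb_comp m n) x = act m (act n x)) ->
  forall C C' x, supportsP (Uact act) C x -> supportsS act C' x -> supportsS act C x.
Proof.
  intros Hid Hcomp C C' x HC HC' m1 m2 Hag.
  destruct (sb_fin m1) as [l1 L1], (sb_fin m2) as [l2 L2].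
  set (D := C ++ C').
  set (M := above (D ++ l1 ++ l2)).
  destruct (perm_patch D (fun c => inb c C) perm_id M) as [p Hp].
  { intros d Hd. apply above_gt, in_or_app. now left. }
  assert (Hfresh : forall c, ~ In (c + M) (l1 ++ l2)).
  { intros c Hc. enough (c + M < M) by lia. apply above_gt, in_or_app. now right. }
  assert (Ep : act p x = x).
  { change (Uact act p x = x). rewrite (HC p perm_id); [apply Hid|].
    intros a Ha. rewrite Hp by (apply in_or_app; auto). now destruct (inbP a C). }
  rewrite <- Ep, <- !Hcomp. apply HC'. intros c Hc. simpl.
  rewrite Hp by (apply in_or_app; auto). destruct (inbP c C) as [Hin|_].
  - apply Hag, Hin.
  - rewrite L1, L2; [reflexivity|..]; intro; apply (Hfresh c), in_or_app; auto.
Qed.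

Lemma sb_comp_id_l m : sb_comp sb_id m = m.
Proof. now apply sb_eq. Qed.

Lemma sb_comp_id_r m : sb_comp m sb_id = m.
Proof. now apply sb_eq. Qed.

Section FreeExtension.
Context {A : Type} (actA : Perm -> A -> A).

Lemma Frel_comp_l n p q :
  Frel actA p q -> Frel actA (sb_comp n (fst p), snd p) (sb_comp n (fst q), snd q).
Proof.
  induction 1; simpl.
  - rewrite <- sb_comp_assoc. apply Frel_perm.
  - apply Frel_supp with C; [assumption|]. intros a Ha. simpl. f_equal. auto.
  - apply Frel_refl.
  - now apply Frel_sym.
  - eapply Frel_trans; eauto.
Qed.

Lemma FT_eq (xi1 xi2 : FT A actA) : proj1_sig xi1 = proj1_sig xi2 -> xi1 = xi2.
Proof. destruct xi1, xi2; simpl; intros ->; f_equal; apply proof_irrelevance. Qed.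

Lemma Fclass_eq p q : Frel actA p q -> Fclass actA p = Fclass actA q.
Proof.
  intro H. apply FT_eq. simpl. apply functional_extensionality. intro r.
  apply propositional_extensionality. split; intro H'.
  - eapply Frel_trans; [apply Frel_sym, H|exact H'].
  - eapply Frel_trans; [exact H|exact H'].
Qed.

Lemma Fclass_inj p q : Fclass actA p = Fclass actA q -> Frel actA p q.
Proof.
  intro H. apply (f_equal (@proj1_sig _ _)) in H. simpl in H. rewrite H. apply Frel_refl.
Qed.

Lemma FrepK (xi : FT A actA) : Fclass actA (Frep xi) = xi.
Proof.
  unfold Frep. destruct (constructive_indefinite_description _ _) as [p Hp].
  now apply FT_eq.
Qed.

Lemma Fclass_surj (xi : FT A actA) : exists p, xi = Fclass actA p.
Proof. exists (Frep xi). symmetry. apply FrepK. Qed.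

Lemma Fact_class n p : Fact actA n (Fclass actA p) = Fclass actA (sb_comp n (fst p), snd p).
Proof.
  apply Fclass_eq, (Frel_comp_l n (Frep (Fclass actA p)) p), Fclass_inj, FrepK.
Qed.

Lemma Fact_id xi : Fact actA sb_id xi = xi.
Proof.
  destruct (Fclass_surj xi) as [[m y] ->]. rewrite Fact_class. simpl.
  now rewrite sb_comp_id_l.
Qed.

Lemma Fact_comp m n xi : Fact actA (sb_comp m n) xi = Fact actA m (Fact actA n xi).
Proof.
  destruct (Fclass_surj xi) as [[k y] ->]. rewrite !Fact_class. simpl.
  now rewrite sb_comp_assoc.
Qed.

Lemma Fclass_perm m (g : Perm) a : Fclass actA (m, actA g a) = Fclass actA (sb_comp m g, a).
Proof. apply Fclass_eq, Frel_perm. Qed.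

Lemma Fact_nominal : nominalP actA -> nominalS (Fact actA).
Proof.
  intros [_ [_ HS]]. split; [apply Fact_id|split; [apply Fact_comp|]].
  intro xi. destruct (Fclass_surj xi) as [[m y] ->], (HS y) as [C HC].
  exists (map m C). intros m1 m2 Hag. rewrite !Fact_class.
  apply Fclass_eq, Frel_supp with C; [exact HC|].
  intros a Ha. apply Hag, in_map, Ha.
Qed.

Lemma Frel_inv : perm_action actA ->
  forall p q, Frel actA p q -> exists g : Perm, snd p = actA g (snd q) /\
    forall c, suppP actA (snd q) c -> fst p (g c) = fst q c.
Proof.
  intros Hact p q HF. pose proof Hact as [Hid [Hcomp _]].
  induction HF as [m g x|m m' x C HC Hag|p|p q _ [g [Ea Hg]]|p q r _ [g [Ea Hg]] _ [h [Eb Hh]]];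
    simpl in *.
  - now exists g.
  - exists perm_id. split; [now rewrite Hid|]. intros c Hc. apply Hag, Hc, HC.
  - exists perm_id. split; [now rewrite Hid|]. reflexivity.
  - exists (perm_inv g). split.
    + rewrite Ea. now rewrite act_invK.
    + intros c Hc. rewrite Ea in Hc. apply (suppP_act Hact) in Hc.
      specialize (Hg _ Hc). simpl. now rewrite pfunK in Hg.
  - exists (perm_comp g h). split.
    + rewrite Hcomp. congruence.
    + intros c Hc. simpl. rewrite Hg; [now apply Hh|].
      rewrite Eb. apply (suppP_act Hact). now rewrite pinvK.
Qed.

(* Rename the support of a representative to atoms beyond C, where the new
   substitution can then be chosen freely. *)
Lemma Fclass_fresh_rep : nominalP actA ->
  forall (xi : FT A actA) (n : Sb) (C : list atom), exists m' a' D',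
    Fclass actA (m', a') = xi /\ agree m' n C /\ supportsP actA D' a' /\
    (forall c, In c D' -> ~ In c C).
Proof.
  intros HA xi n C. pose proof (nominalP_perm_action actA HA) as Hact.
  destruct (Fclass_surj xi) as [[m0 a0] ->].
  destruct HA as [_ [_ HS]]. destruct (HS a0) as [D0 HD0].
  set (M := above (C ++ D0)).
  assert (HM : forall d, ~ In (d + M) C).
  { intros d Hd. enough (d + M < M) by lia. apply above_gt, in_or_app. now left. }
  destruct (perm_patch D0 (fun _ => false) perm_id M) as [p Hp].
  { intros d Hd. apply above_gt, in_or_app. now right. }
  set (F := fun b => if inb b C then n b
                     else if andb (M <=? b) (inb (b - M) D0) then m0 (b - M) else b).
  assert (Hfin : forall b, ~ In b (C ++ map (fun d => d + M) D0) -> F b = b).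
  { intros b Hb. unfold F. destruct (inbP b C) as [Hin|_].
    - exfalso. apply Hb, in_or_app. now left.
    - destruct (Nat.leb_spec M b), (inbP (b - M) D0); try reflexivity.
      exfalso. apply Hb, in_or_app. right. apply in_map_iff. exists (b - M). split; [lia|auto]. }
  exists (mkSb F (ex_intro _ _ Hfin)), (actA p a0), (map p D0). split; [|split; [|split]].
  - rewrite Fclass_perm. apply Fclass_eq, Frel_supp with D0; [exact HD0|].
    intros d Hd. simpl. rewrite Hp by assumption. unfold F.
    destruct (inbP (d + M) C) as [Hin|_]; [now apply HM in Hin|].
    replace (d + M - M) with d by lia.
    destruct (Nat.leb_spec M (d + M)); [|lia]. now destruct (inbP d D0).
  - intros c Hc. simpl. unfold F. now destruct (inbP c C).
  - now apply supportsP_act.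
  - intros c Hc. apply in_map_iff in Hc as [d [<- Hd]]. rewrite Hp by assumption. apply HM.
Qed.

Section EquivariantExtension.
Context {X : Type} (act : Sb -> X -> X) (k : A -> X).
Hypotheses (act_id : forall x, act sb_id x = x)
  (act_comp : forall m n x, act (sb_comp m n) x = act m (act n x))
  (k_supp : forall a, exists C, supportsS act C (k a))
  (k_equiv : forall (g : Perm) a, k (actA g a) = act g (k a)).

Lemma Frel_ext p q : Frel actA p q -> act (fst p) (k (snd p)) = act (fst q) (k (snd q)).
Proof.
  induction 1 as [m g x|m m' x C HC Hag|p|p q _ IH|p q r _ IH1 _ IH2]; simpl in *.
  - now rewrite k_equiv, act_comp.
  - destruct (k_supp x) as [C' HC'].
    apply (supportsS_of_supportsP act act_id act_comp C C'); [|exact HC'|exact Hag].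
    intros g1 g2 Hg. unfold Uact. rewrite <- !k_equiv. f_equal. now apply HC.
  - reflexivity.
  - now symmetry.
  - congruence.
Qed.

Definition extF (xi : FT A actA) : X := act (fst (Frep xi)) (k (snd (Frep xi))).

Lemma extF_class p : extF (Fclass actA p) = act (fst p) (k (snd p)).
Proof. apply Frel_ext, Fclass_inj, FrepK. Qed.

End EquivariantExtension.
End FreeExtension.

Section Separating.
Context {A X : Type} (actA : Perm -> A -> A) (actX : Perm -> X -> X).

Lemma sepact_perm_action :
  perm_action actA -> perm_action actX -> perm_action (sepact actA actX).
Proof.
  intros [A1 [A2 A3]] [X1 [X2 X3]]. unfold sepact. split; [|split].
  - intro f. apply functional_extensionality. intro a.
    rewrite (A3 (perm_inv perm_id) perm_id), A1 by reflexivity.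
    destruct (f a); simpl; now rewrite ?X1.
  - intros g h f. apply functional_extensionality. intro a.
    rewrite (A3 (perm_inv (perm_comp g h)) (perm_comp (perm_inv h) (perm_inv g))), A2
      by reflexivity.
    destruct (f _); simpl; now rewrite ?X2.
  - intros g1 g2 f E. apply functional_extensionality. intro a.
    rewrite (A3 (perm_inv g1) (perm_inv g2)).
    + destruct (f _); simpl; now rewrite ?(X3 g1 g2).
    + intro b. simpl. rewrite <- (pinvK g2 (pinv g1 b)), <- E. now rewrite pfunK.
Qed.

Lemma sepact_app : perm_action actA -> forall (g : Perm) f a,
  sepact actA actX g f (actA g a) = option_map (actX g) (f a).
Proof. intros Hact g f a. unfold sepact. now rewrite act_invK. Qed.

Section Application.
Hypotheses (HA : nominalP actA) (HX : nominalP actX).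
Variables (psi : SepFun A X actA actX) (L : list atom).
Hypotheses (HLs : supportsP (sepact actA actX) L (proj1_sig psi))
  (HL : forall c, In c L <-> suppP (sepact actA actX) (proj1_sig psi) c).

Lemma sepfun_app_supports a y La :
  proj1_sig psi a = Some y -> supportsP actA La a -> supportsP actX (L ++ La) y.
Proof.
  intros Ea HLa h1 h2 Hh. pose proof (nominalP_perm_action _ HA) as OA.
  assert (S1 : sepact actA actX h1 (proj1_sig psi) = sepact actA actX h2 (proj1_sig psi))
    by (apply HLs; intros c Hc; apply Hh, in_or_app; auto).
  assert (S2 : actA h1 a = actA h2 a)
    by (apply HLa; intros c Hc; apply Hh, in_or_app; auto).
  pose proof (sepact_app OA h1 (proj1_sig psi) a) as T1.
  pose proof (sepact_app OA h2 (proj1_sig psi) a) as T2.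
  rewrite S1, S2, T2, Ea in T1. simpl in T1. congruence.
Qed.

(* If psi is defined at a1 = g a2, then supp psi is disjoint from supp a1 and from
   supp a2 = g^-1 (supp a1), so g can be modified to fix supp psi. *)
Lemma sepfun_perm_fixing a1 a2 (g : Perm) L2 :
  proj1_sig psi a1 <> None -> proj1_sig psi a2 <> None -> a1 = actA g a2 ->
  supportsP actA L2 a2 -> (forall c, In c L2 -> suppP actA a2 c) ->
  exists g' : Perm, (forall c, In c L -> g' c = c) /\ (forall c, In c L2 -> g' c = g c).
Proof.
  intros D1 D2 Ea HL2s HL2. pose proof (nominalP_perm_action _ HA) as OA.
  apply (proj2 (proj2_sig psi)) in D1, D2.
  assert (Hg : forall c, In c L2 -> ~ In (g c) L).
  { intros c Hc Hgc. apply (D1 (g c)); [now apply HL|].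
    rewrite Ea. apply (suppP_act OA). rewrite pinvK. now apply HL2. }
  destruct (perm_extending (L ++ L2) (fun c => if inb c L then c else g c)) as [g' Hg'].
  - intros a b Ha Hb. apply in_app_or in Ha, Hb.
    destruct (inbP a L) as [HaL|HaL], (inbP b L) as [HbL|HbL]; intro E.
    + exact E.
    + exfalso. apply (Hg b); [tauto|]. now rewrite <- E.
    + exfalso. apply (Hg a); [tauto|]. now rewrite E.
    + rewrite <- (pinvK g a), <- (pinvK g b). now f_equal.
  - exists g'. split; intros c Hc; rewrite Hg' by (apply in_or_app; auto).
    + now destruct (inbP c L).
    + destruct (inbP c L) as [HcL|]; [|reflexivity].
      exfalso. apply (D2 c); [now apply HL|now apply HL2].
Qed.

Lemma sepfun_Frel m1 a1 m2 a2 y1 y2 :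
  Frel actA (m1, a1) (m2, a2) -> agree m1 m2 L ->
  proj1_sig psi a1 = Some y1 -> proj1_sig psi a2 = Some y2 ->
  Frel actX (m1, y1) (m2, y2).
Proof.
  intros HF Hag E1 E2.
  pose proof (nominalP_perm_action _ HA) as OA. pose proof (nominalP_perm_action _ HX) as OX.
  destruct (Frel_inv actA OA _ _ HF) as [g [Ea Hg]]. simpl in Ea, Hg.
  destruct (least_supportP (act := actA) a2) as [L2 [HL2s HL2]]; [exact (proj2 (proj2 HA) a2)|].
  destruct (sepfun_perm_fixing a1 a2 g L2) as [g' [HgL HgL2]]; try congruence.
  { exact HL2s. }
  { intros c Hc. now apply HL2. }
  assert (Ea' : actA g' a2 = a1).
  { rewrite Ea. apply HL2s. intros c Hc. now apply HgL2. }
  assert (Ep : sepact actA actX g' (proj1_sig psi) = proj1_sig psi).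
  { rewrite (HLs g' perm_id); [now apply sepact_perm_action|]. intros c Hc. now apply HgL. }
  assert (Ey : y1 = actX g' y2).
  { rewrite <- Ea', <- Ep, sepact_app, E2 in E1 by exact OA. simpl in E1. congruence. }
  subst y1. eapply Frel_trans; [apply Frel_perm|].
  apply Frel_supp with (L ++ L2); [now apply (sepfun_app_supports a2)|].
  intros c Hc. simpl. apply in_app_or in Hc as [Hc|Hc].
  - rewrite HgL by exact Hc. now apply Hag.
  - rewrite HgL2 by exact Hc. apply Hg, HL2, Hc.
Qed.

End Application.
End Separating.

Lemma Uact_perm_action {X : Type} (act : Sb -> X -> X) :
  (forall x, act sb_id x = x) -> (forall m n x, act (sb_comp m n) x = act m (act n x)) ->
  perm_action (Uact act).
Proof.
  intros Hid Hcomp. split; [exact Hid|split; [intros; apply Hcomp|]].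
  intros g1 g2 x E. unfold Uact. f_equal. now apply sb_eq.
Qed.

Lemma nominalS_Uact {X : Type} (act : Sb -> X -> X) : nominalS act -> nominalP (Uact act).
Proof.
  intros [Hid [Hcomp Hsupp]]. split; [exact Hid|split; [intros; apply Hcomp|]].
  intro x. destruct (Hsupp x) as [C HC]. exists C. now apply supportsP_Uact.
Qed.

Lemma disjP_of_supports {X Y : Type} (actX : Perm -> X -> X) (actY : Perm -> Y -> Y)
  x y C D :
  supportsP actX C x -> supportsP actY D y -> (forall c, In c D -> ~ In c C) ->
  disjP actX actY x y.
Proof. intros HC HD Hdisj c Sx Sy. exact (Hdisj c (Sy D HD) (Sx C HC)). Qed.

Lemma disjP_act {X Y : Type} (actX : Perm -> X -> X) (actY : Perm -> Y -> Y) :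
  perm_action actX -> perm_action actY -> forall g x y,
  disjP actX actY (actX g x) (actY g y) <-> disjP actX actY x y.
Proof.
  intros OX OY g x y. unfold disjP. split.
  - intros H d Hx Hy. apply (H (g d)); apply suppP_act; auto; now rewrite pinvK.
  - intros H c Hx Hy. apply suppP_act in Hx, Hy; eauto.
Qed.

Lemma expact_id {A Z : Type} (f : Sb -> A -> Z) : expact sb_id f = f.
Proof.
  apply functional_extensionality; intro n. unfold expact. now rewrite sb_comp_id_r.
Qed.

Lemma expact_comp {A Z : Type} m n (f : Sb -> A -> Z) :
  expact (sb_comp m n) f = expact m (expact n f).
Proof.
  apply functional_extensionality; intro k. unfold expact. now rewrite sb_comp_assoc.
Qed.

Definition is_exp {A Z : Type} (actA : Sb -> A -> A) (actZ : Sb -> Z -> Z)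
  (f : Sb -> A -> Z) : Prop :=
  (forall k n a, f (sb_comp k n) (actA k a) = actZ k (f n a)) /\
  (exists C, supportsS expact C f).

Lemma is_exp_act {A Z : Type} (actA : Sb -> A -> A) (actZ : Sb -> Z -> Z) m f :
  is_exp actA actZ f -> is_exp actA actZ (expact m f).
Proof.
  intros [Heq [C HC]]. split.
  - intros k n a. unfold expact. rewrite sb_comp_assoc. apply Heq.
  - exists (map m C). intros m1 m2 Hag. rewrite <- !expact_comp. apply HC.
    intros c Hc. apply Hag, in_map, Hc.
Qed.

Definition exp_act {A Z : Type} (actA : Sb -> A -> A) (actZ : Sb -> Z -> Z) (m : Sb)
  (e : Exp A Z actA actZ) : Exp A Z actA actZ :=
  exist _ (expact m (proj1_sig e)) (is_exp_act actA actZ m _ (proj2_sig e)).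

Section ExpToSep.
Variable Sig : NomPerm.
Context {Z : Type}.
Variable actZ : Sb -> Z -> Z.

(* phi^-1: a function on F Sigma is determined by its values at [id, a] for the
   a fresh for it. *)
Definition sep_of_exp (f : Sb -> FSig Sig -> Z) (a : pCar Sig) : option Z :=
  if excluded_middle_informative (disjP (Uact expact) (pAct Sig) f a)
  then Some (f sb_id (Fclass (pAct Sig) (sb_id, a))) else None.

Lemma sep_of_exp_Some f a z :
  sep_of_exp f a = Some z -> z = f sb_id (Fclass (pAct Sig) (sb_id, a)).
Proof. unfold sep_of_exp. destruct (excluded_middle_informative _); congruence. Qed.

Lemma sep_of_exp_disj f a :
  disjP (Uact expact) (pAct Sig) f a ->
  sep_of_exp f a = Some (f sb_id (Fclass (pAct Sig) (sb_id, a))).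
Proof. unfold sep_of_exp. destruct (excluded_middle_informative _); tauto. Qed.

Lemma exp_eval_fresh f C :
  is_exp (FSigAct Sig) actZ f -> supportsS expact C f ->
  forall (n m' : Sb) a', agree m' n C ->
  f n (Fclass (pAct Sig) (m', a')) = actZ m' (f sb_id (Fclass (pAct Sig) (sb_id, a'))).
Proof.
  intros [Heq _] HC n m' a' Hag.
  assert (E : expact n f = expact m' f) by (apply HC; intros c Hc; symmetry; now apply Hag).
  apply (f_equal (fun h => h sb_id (Fclass (pAct Sig) (m', a')))) in E.
  unfold expact in E. rewrite !sb_comp_id_l in E. rewrite E, <- Heq, sb_comp_id_r.
  unfold FSigAct. rewrite Fact_class. simpl. now rewrite sb_comp_id_r.
Qed.

Lemma sep_of_exp_act f (g : Perm) :
  is_exp (FSigAct Sig) actZ f ->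
  sep_of_exp (Uact expact g f) = sepact (pAct Sig) (Uact actZ) g (sep_of_exp f).
Proof.
  intros [Heq _]. pose proof (nominalP_perm_action _ (pNom Sig)) as OS.
  pose proof (Uact_perm_action (@expact (FSig Sig) Z) expact_id expact_comp) as OE.
  apply functional_extensionality. intro a. unfold sepact, sep_of_exp.
  set (b := pAct Sig (perm_inv g) a).
  assert (Eb : a = pAct Sig g b) by (unfold b; now rewrite act_Kinv).
  destruct (excluded_middle_informative (disjP _ _ _ a)) as [d1|d1],
           (excluded_middle_informative (disjP _ _ _ b)) as [d2|d2]; simpl.
  - f_equal. unfold Uact, expact. rewrite <- Heq, sb_comp_id_r, sb_comp_id_l. f_equal.
    unfold FSigAct. rewrite Fact_class, Eb, Fclass_perm. simpl.
    now rewrite sb_comp_id_r, sb_comp_id_l.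
  - exfalso. apply d2, (disjP_act _ _ OE OS g). now rewrite <- Eb.
  - exfalso. apply d1. rewrite Eb. now apply (disjP_act _ _ OE OS g).
  - reflexivity.
Qed.

Lemma sep_of_exp_inj f1 f2 :
  is_exp (FSigAct Sig) actZ f1 -> is_exp (FSigAct Sig) actZ f2 ->
  sep_of_exp f1 = sep_of_exp f2 -> f1 = f2.
Proof.
  intros H1 H2 E. pose proof H1 as [_ [C1 HC1]]. pose proof H2 as [_ [C2 HC2]].
  apply functional_extensionality; intro n. apply functional_extensionality; intro xi.
  destruct (Fclass_fresh_rep (pAct Sig) (pNom Sig) xi n (C1 ++ C2))
    as [m' [a' [D' [<- [Hag [HD' Hfresh]]]]]].
  rewrite (exp_eval_fresh f1 C1 H1 HC1 n m' a'), (exp_eval_fresh f2 C2 H2 HC2 n m' a')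
    by (intros c Hc; apply Hag, in_or_app; auto).
  f_equal. apply (f_equal (fun h => h a')) in E.
  rewrite !sep_of_exp_disj in E; [congruence|..];
    (eapply disjP_of_supports; [apply supportsP_Uact; eassumption|exact HD'|]);
    intros c Hc Hin; apply (Hfresh c Hc), in_or_app; auto.
Qed.

Lemma sep_of_exp_supports f C :
  is_exp (FSigAct Sig) actZ f ->
  supportsP (sepact (pAct Sig) (Uact actZ)) C (sep_of_exp f) <->
  supportsP (Uact expact) C f.
Proof.
  intros Hf. split; intros H g1 g2 Hag.
  - apply sep_of_exp_inj; try now apply is_exp_act.
    rewrite !sep_of_exp_act by exact Hf. now apply H.
  - rewrite <- !sep_of_exp_act by exact Hf. f_equal. now apply H.
Qed.

Lemma sep_of_exp_sepfun f :
  is_exp (FSigAct Sig) actZ f ->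
  (exists C, supportsP (sepact (pAct Sig) (Uact actZ)) C (sep_of_exp f)) /\
  (forall a, sep_of_exp f a <> None <->
     disjP (sepact (pAct Sig) (Uact actZ)) (pAct Sig) (sep_of_exp f) a).
Proof.
  intros Hf. pose proof Hf as [_ [C HC]].
  assert (Hsupp : forall c, suppP (sepact (pAct Sig) (Uact actZ)) (sep_of_exp f) c <->
                            suppP (Uact expact) f c).
  { intro c. unfold suppP. split; intros H C' HC'; apply H, sep_of_exp_supports; auto. }
  split.
  - exists C. apply sep_of_exp_supports; [exact Hf|]. now apply supportsP_Uact.
  - intro a. unfold sep_of_exp at 1. destruct (excluded_middle_informative _) as [d|d].
    + split; [intros _|congruence]. intros c S1 S2. apply (d c); [apply Hsupp|]; auto.
    + split; [congruence|]. intros D. exfalso. apply d. intros c S1 S2.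
      apply (D c); [apply Hsupp|]; auto.
Qed.

Definition SepOfExp (F : Exp (FSig Sig) Z (FSigAct Sig) actZ) :
  SepFun (pCar Sig) Z (pAct Sig) (Uact actZ) :=
  exist _ (sep_of_exp (proj1_sig F)) (sep_of_exp_sepfun (proj1_sig F) (proj2_sig F)).

Lemma phi_rel_SepOfExp (F : Exp (FSig Sig) Z (FSigAct Sig) actZ) s xi :
  phi_rel Sig (SepOfExp F) s xi (proj1_sig F s xi).
Proof.
  set (f := proj1_sig F). pose proof (proj2_sig F : is_exp _ _ f) as Hf.
  pose proof Hf as [_ [C HC]].
  destruct (Fclass_fresh_rep (pAct Sig) (pNom Sig) xi s C)
    as [m' [a' [D' [Exi [Hag [HD' Hfresh]]]]]].
  exists m', (SepOfExp F), a', (f sb_id (Fclass (pAct Sig) (sb_id, a'))).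
  split; [|split; [|split]].
  - apply sep_of_exp_disj. eapply disjP_of_supports; [|exact HD'|exact Hfresh].
    now apply supportsP_Uact.
  - apply Frel_supp with C; [|exact Hag].
    apply sep_of_exp_supports; [exact Hf|]. now apply supportsP_Uact.
  - exact Exi.
  - rewrite <- Exi. now apply (exp_eval_fresh f C).
Qed.

End ExpToSep.

Section SepToExp.
Variables Sig Y : NomPerm.

Definition SepY := SepFun (pCar Sig) (pCar Y) (pAct Sig) (pAct Y).

Lemma sepfun_least_support (psi : SepY) :
  exists L, supportsP (sepact (pAct Sig) (pAct Y)) L (proj1_sig psi) /\
    forall c, In c L <-> suppP (sepact (pAct Sig) (pAct Y)) (proj1_sig psi) c.
Proof. apply least_supportP, (proj1 (proj2_sig psi)). Qed.

Definition sep_supp (psi : SepY) : list atom :=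
  proj1_sig (constructive_indefinite_description _ (sepfun_least_support psi)).

Lemma sep_supp_spec (psi : SepY) :
  supportsP (sepact (pAct Sig) (pAct Y)) (sep_supp psi) (proj1_sig psi) /\
  forall c, In c (sep_supp psi) <-> suppP (sepact (pAct Sig) (pAct Y)) (proj1_sig psi) c.
Proof. unfold sep_supp. now destruct (constructive_indefinite_description _ _). Qed.

Lemma sepfun_fresh_rep (psi : SepY) (n : Sb) (xi : FSig Sig) :
  exists t : Sb * pCar Sig * pCar Y,
    Fclass (pAct Sig) (fst t) = xi /\ agree (fst (fst t)) n (sep_supp psi) /\
    proj1_sig psi (snd (fst t)) = Some (snd t).
Proof.
  destruct (Fclass_fresh_rep (pAct Sig) (pNom Sig) xi n (sep_supp psi))
    as [m' [a' [D' [Exi [Hag [HD' Hfresh]]]]]].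
  destruct (proj1_sig psi a') as [y'|] eqn:Ea.
  - now exists (m', a', y').
  - exfalso. apply (proj2 (proj2_sig psi) a'); [|exact Ea].
    eapply disjP_of_supports; [apply sep_supp_spec|exact HD'|exact Hfresh].
Qed.

(* phi applied to the composite of psi with the unit Y -> U F Y:
   [m', a'] |-> [m', psi a'] for a representative with m' = n on supp psi. *)
Definition exp_of_sep (psi : SepY) (n : Sb) (xi : FSig Sig) : FT (pCar Y) (pAct Y) :=
  let t := proj1_sig (constructive_indefinite_description _ (sepfun_fresh_rep psi n xi)) in
  Fclass (pAct Y) (fst (fst t), snd t).

Lemma exp_of_sep_spec (psi : SepY) (n : Sb) (xi : FSig Sig) (m' : Sb) a' y' :
  Fclass (pAct Sig) (m', a') = xi -> agree m' n (sep_supp psi) -> proj1_sig psi a' = Some y' ->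
  exp_of_sep psi n xi = Fclass (pAct Y) (m', y').
Proof.
  intros E1 E2 E3. unfold exp_of_sep.
  destruct (constructive_indefinite_description _ _) as [[[m1 a1] y1] [F1 [F2 F3]]].
  simpl in *. apply Fclass_eq. destruct (sep_supp_spec psi) as [HLs HL].
  apply (sepfun_Frel _ _ (pNom Sig) (pNom Y) psi (sep_supp psi) HLs HL m1 a1 m' a'); auto.
  - apply Fclass_inj. congruence.
  - intros c Hc. rewrite F2, E2; auto.
Qed.

Lemma exp_of_sep_rep (psi : SepY) (n : Sb) (xi : FSig Sig) :
  exists m' a' y', Fclass (pAct Sig) (m', a') = xi /\ agree m' n (sep_supp psi) /\
    proj1_sig psi a' = Some y' /\ exp_of_sep psi n xi = Fclass (pAct Y) (m', y').
Proof.
  destruct (sepfun_fresh_rep psi n xi) as [[[m' a'] y'] [E1 [E2 E3]]].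
  exists m', a', y'. repeat split; try assumption. now apply (exp_of_sep_spec psi n xi m' a').
Qed.

Lemma exp_of_sep_supports (psi : SepY) : supportsS expact (sep_supp psi) (exp_of_sep psi).
Proof.
  intros m1 m2 Hag. apply functional_extensionality; intro n.
  apply functional_extensionality; intro xi. unfold expact.
  destruct (exp_of_sep_rep psi (sb_comp n m1) xi) as [k [a [y [E1 [E2 [E3 ->]]]]]].
  symmetry. apply (exp_of_sep_spec psi _ _ _ a); auto.
  intros c Hc. rewrite E2 by exact Hc. simpl. now rewrite Hag.
Qed.

Lemma exp_of_sep_is_exp (psi : SepY) :
  is_exp (FSigAct Sig) (Fact (pAct Y)) (exp_of_sep psi).
Proof.
  split.
  - intros k n xi. destruct (exp_of_sep_rep psi n xi) as [m [a [y [E1 [E2 [E3 ->]]]]]].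
    rewrite Fact_class. apply (exp_of_sep_spec psi _ _ _ a); auto.
    + rewrite <- E1. unfold FSigAct. now rewrite Fact_class.
    + intros c Hc. simpl. now rewrite E2.
  - exists (sep_supp psi). apply exp_of_sep_supports.
Qed.

Lemma exp_of_sep_act (psi psi' : SepY) (g : Perm) :
  proj1_sig psi' = sepact (pAct Sig) (pAct Y) g (proj1_sig psi) ->
  exp_of_sep psi' = expact g (exp_of_sep psi).
Proof.
  intros Ep. pose proof (nominalP_perm_action _ (pNom Sig)) as OS.
  pose proof (nominalP_perm_action _ (pNom Y)) as OY.
  apply functional_extensionality; intro n. apply functional_extensionality; intro xi.
  destruct (exp_of_sep_rep psi' n xi) as [m [a [y [E1 [E2 [E3 ->]]]]]].
  rewrite Ep in E3. unfold sepact in E3.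
  match type of E3 with option_map _ ?t = _ => destruct t as [y0|] eqn:E0 end;
    simpl in E3; [|discriminate E3].
  injection E3 as <-. unfold expact. symmetry.
  transitivity (Fclass (pAct Y) (sb_comp m g, y0)).
  - apply (exp_of_sep_spec psi _ _ _ (pAct Sig (perm_inv g) a)); [|..|exact E0].
    + rewrite <- E1, <- Fclass_perm. now rewrite act_Kinv.
    + intros c Hc. simpl. apply E2.
      destruct (sep_supp_spec psi) as [_ HL], (sep_supp_spec psi') as [_ HL'].
      apply HL'. rewrite Ep. apply (suppP_act (sepact_perm_action _ _ OS OY)).
      rewrite pinvK. now apply HL.
  - symmetry. apply Fclass_perm.
Qed.

Lemma exp_of_sep_disj {Z : Type} (k : FT (pCar Y) (pAct Y) -> Z) (psi : SepY) a :
  proj1_sig psi a <> None ->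
  disjP (Uact expact) (pAct Sig) (fun n xi => k (exp_of_sep psi n xi)) a.
Proof.
  intros Ha c Sk Sa. apply (proj1 (proj2 (proj2_sig psi) a) Ha c); [|exact Sa].
  apply (sep_supp_spec psi), Sk, supportsP_Uact. intros m1 m2 Hag. unfold expact.
  apply functional_extensionality; intro n. apply functional_extensionality; intro xi.
  f_equal. exact (f_equal (fun F => F n xi) (exp_of_sep_supports psi m1 m2 Hag)).
Qed.

Definition ExpOfSep (psi : SepY) :
  Exp (FSig Sig) (FT (pCar Y) (pAct Y)) (FSigAct Sig) (Fact (pAct Y)) :=
  exist _ (exp_of_sep psi) (exp_of_sep_is_exp psi).

End SepToExp.

Definition FNom (Y : NomPerm) : NomSb :=
  Build_NomSb (FT (pCar Y) (pAct Y)) (Fact (pAct Y)) (Fact_nominal _ (pNom Y)).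

Section LiftCoalg.
Variables (Sig : NomPerm) (O : NomSb) (Y : NomPerm).
Variable delta : pCar Y -> Sobj Sig O (pAct Y).
Hypothesis delta_equiv : S_equiv Sig O delta.

(* The B-coalgebra on F Y adjoint to delta: [m, y] |-> m . (o_y, phi(eta o psi_y)). *)
Definition lift_coalg (xi : sCar (FNom Y)) : Bobj Sig O (sAct (FNom Y)) :=
  (sAct O (fst (Frep xi)) (fst (delta (snd (Frep xi)))),
   exp_act (FSigAct Sig) (Fact (pAct Y)) (fst (Frep xi))
     (ExpOfSep Sig Y (snd (delta (snd (Frep xi)))))).

Lemma lift_coalg_class m y :
  fst (lift_coalg (Fclass (pAct Y) (m, y))) = sAct O m (fst (delta y)) /\
  proj1_sig (snd (lift_coalg (Fclass (pAct Y) (m, y)))) =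
    expact m (exp_of_sep Sig Y (snd (delta y))).
Proof.
  pose proof (Fclass_inj _ _ _ (FrepK (pAct Y) (Fclass (pAct Y) (m, y)))) as HF.
  destruct (sNom O) as [O1 [O2 O3]]. split; simpl.
  - apply (Frel_ext (pAct Y) (sAct O) (fun y => fst (delta y)) O1 O2) with (q := (m, y));
      [intro a; apply O3|intros g a; apply delta_equiv|exact HF].
  - apply (Frel_ext (pAct Y) expact (fun y => exp_of_sep Sig Y (snd (delta y)))
             expact_id expact_comp) with (q := (m, y)); [..|exact HF].
    + intro a. apply (proj2 (exp_of_sep_is_exp Sig Y _)).
    + intros g a. apply exp_of_sep_act, delta_equiv.
Qed.

Lemma lift_coalg_equiv : B_equiv Sig O lift_coalg.
Proof.
  intros m xi. destruct (Fclass_surj _ xi) as [[k y] ->].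
  change (sAct (FNom Y) m) with (Fact (pAct Y) m). rewrite Fact_class. cbn [fst snd].
  destruct (lift_coalg_class (sb_comp m k) y) as [-> ->], (lift_coalg_class k y) as [-> ->].
  split; [apply (proj1 (proj2 (sNom O)))|apply expact_comp].
Qed.

End LiftCoalg.

Section Transfer.
Variables (Sig : NomPerm) (O : NomSb).
Context {Z : Type} {actZ : Sb -> Z -> Z}.
Variable zeta : Z -> Bobj Sig O actZ.

Definition S_of_B (z : Z) : Sobj Sig O (Uact actZ) :=
  (fst (zeta z), SepOfExp Sig actZ (snd (zeta z))).

Lemma S_of_B_equiv : B_equiv Sig O zeta -> S_equiv Sig O S_of_B.
Proof.
  intros Hz g z. destruct (Hz g z) as [Z1 Z2]. split; [exact Z1|]. simpl.
  unfold Uact at 1. rewrite Z2. apply sep_of_exp_act, (proj2_sig (snd (zeta z))).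
Qed.

Section Morphisms.
Variables (Y : NomPerm) (delta : pCar Y -> Sobj Sig O (pAct Y)).
Hypothesis delta_equiv : S_equiv Sig O delta.

Lemma S_hom_of_B_hom hB :
  B_hom Sig O (lift_coalg Sig O Y delta) zeta hB ->
  S_hom Sig O delta S_of_B (fun y => hB (Fclass (pAct Y) (sb_id, y))).
Proof.
  intros [HhB_equiv HhB]. split.
  - intros g y. unfold Uact. rewrite <- HhB_equiv. f_equal.
    change (sAct (FNom Y) g) with (Fact (pAct Y) g).
    rewrite Fact_class, Fclass_perm. simpl. now rewrite sb_comp_id_l, sb_comp_id_r.
  - intro y. destruct (HhB (Fclass (pAct Y) (sb_id, y))) as [Hfst Hsnd].
    destruct (lift_coalg_class Sig O Y delta delta_equiv sb_id y) as [Kfst Ksnd].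
    split.
    + simpl. rewrite Hfst, Kfst. apply (proj1 (sNom O)).
    + intros a x Ha. simpl.
      set (psi := snd (delta y)) in *.
      set (f := proj1_sig (snd (zeta (hB (Fclass (pAct Y) (sb_id, y)))))).
      assert (Hf : f = fun n xi => hB (exp_of_sep Sig Y psi n xi)).
      { apply functional_extensionality; intro n. apply functional_extensionality; intro xi.
        unfold f. rewrite Hsnd, Ksnd. unfold expact. now rewrite sb_comp_id_r. }
      rewrite Hf, sep_of_exp_disj by (apply exp_of_sep_disj; congruence).
      f_equal. f_equal. now apply (exp_of_sep_spec Sig Y psi _ _ _ a).
Qed.

Section FromSHom.
Variable h : pCar Y -> Z.
Hypotheses (Z_nominal : nominalS actZ) (zeta_equiv : B_equiv Sig O zeta)
  (h_hom : S_hom Sig O delta S_of_B h).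

Lemma S_hom_extF_class p : extF (pAct Y) actZ h (Fclass (pAct Y) p) = actZ (fst p) (h (snd p)).
Proof.
  destruct Z_nominal as [N1 [N2 N3]].
  apply extF_class; [exact N1|exact N2|intro; apply N3|apply h_hom].
Qed.

(* Evaluate at a representative [m1, a1] with a1 fresh for both psi and f. *)
Lemma S_hom_exp_of_sep y s xi :
  proj1_sig (snd (zeta (h y))) s xi =
  extF (pAct Y) actZ h (exp_of_sep Sig Y (snd (delta y)) s xi).
Proof.
  set (psi := snd (delta y)).
  set (f := proj1_sig (snd (zeta (h y)))).
  pose proof (proj2_sig (snd (zeta (h y))) : is_exp _ _ f) as Hf.
  pose proof Hf as [_ [C HC]].
  destruct (Fclass_fresh_rep (pAct Sig) (pNom Sig) xi s (sep_supp Sig Y psi ++ C))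
    as [m1 [a1 [D' [Exi [Hag [HD' Hfresh]]]]]].
  destruct (proj1_sig psi a1) as [y1|] eqn:Ea.
  2:{ exfalso. apply (proj2 (proj2_sig psi) a1); [|exact Ea].
      eapply disjP_of_supports; [apply sep_supp_spec|exact HD'|].
      intros c Hc Hin. apply (Hfresh c Hc), in_or_app. now left. }
  rewrite (exp_of_sep_spec Sig Y psi s xi m1 a1 y1 Exi), S_hom_extF_class;
    [|intros c Hc; apply Hag, in_or_app; now left|exact Ea].
  pose proof (proj2 (proj2 h_hom y) a1 y1 Ea) as Hs. simpl in Hs.
  apply sep_of_exp_Some in Hs. simpl. rewrite Hs, <- Exi.
  apply (exp_eval_fresh Sig actZ f C Hf HC s m1 a1).
  intros c Hc. apply Hag, in_or_app. now right.
Qed.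

Lemma B_hom_of_S_hom : B_hom Sig O (lift_coalg Sig O Y delta) zeta (extF (pAct Y) actZ h).
Proof.
  split.
  - intros m xi. destruct (Fclass_surj _ xi) as [[k y] ->].
    change (sAct (FNom Y) m) with (Fact (pAct Y) m).
    rewrite Fact_class, !S_hom_extF_class. apply (proj1 (proj2 Z_nominal)).
  - intros xi. destruct (Fclass_surj _ xi) as [[m y] ->].
    destruct (lift_coalg_class Sig O Y delta delta_equiv m y) as [Kfst Ksnd].
    rewrite S_hom_extF_class. cbn [fst snd].
    destruct (zeta_equiv m (h y)) as [Zfst Zsnd]. split.
    + rewrite Zfst, Kfst. f_equal. exact (proj1 (proj2 h_hom y)).
    + intros n xi'. rewrite Zsnd, Ksnd. apply S_hom_exp_of_sep.
Qed.

End FromSHom.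
End Morphisms.
End Transfer.

Theorem mainTheorem11 (Sig : NomPerm) (O : NomSb)
  (zeta : Carrier Sig O -> Bobj Sig O (CarrierAct Sig O))
  (Hfin : final_B Sig O zeta) :
  exists gam : Carrier Sig O -> Sobj Sig O (Uact (CarrierAct Sig O)),
    (forall e, fst (gam e) = fst (zeta e) /\
       forall s xi, phi_rel Sig (snd (gam e)) s xi (proj1_sig (snd (zeta e)) s xi)) /\
    final_S Sig O gam.
Proof.
  destruct Hfin as [Hnom [Hzeta Hfinal]].
  exists (S_of_B Sig O zeta). split; [|split; [|split]].
  - intro e. split; [reflexivity|]. intros s xi. apply phi_rel_SepOfExp.
  - now apply nominalS_Uact.
  - now apply S_of_B_equiv.
  - intros Y delta Hdelta.
    destruct (Hfinal (FNom Y) (lift_coalg Sig O Y delta) (lift_coalg_equiv Sig O Y delta Hdelta))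
      as [hB [HhB Hunique]].
    exists (fun y => hB (Fclass (pAct Y) (sb_id, y))).
    split; [now apply S_hom_of_B_hom|].
    intros h Hh y.
    rewrite <- (Hunique _ (B_hom_of_S_hom Sig O zeta Y delta Hdelta h Hnom Hzeta Hh)).
    rewrite (S_hom_extF_class Sig O zeta Y delta h Hnom Hh). symmetry. apply (proj1 Hnom).
Qed.
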